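(* Let $m\mathcal{M}$ be the maximal matching feature. Then for every weighted graph $(G,f)$ one has $\sigma^{m\mathcal{M}}_{(G,f)}=\varrho^{m\mathcal{M}}_{(G,f)}$, and the generator $\sigma^{m\mathcal{M}}=\varrho^{m\mathcal{M}}$ is balanced: for every graph $G=(V,E)$, every two filtering functions $f,g:E\to\mathbb{R}$ and every $h>0$ with $\sup_{e\in E}|f(e)-g(e)|\le h$, $\sigma^{m\mathcal{M}}_{(G,f)}(u-h,v+h)\le\sigma^{m\mathcal{M}}_{(G,g)}(u,v)$ for all $(u,v)\in\Delta^+$.
   Context: Graphs are finite simple undirected graphs; a weighted graph is $(G,f)$ with $G=(V,E)$, $f:E\to\mathbb{R}$. For $u\in\mathbb{R}$, $G_u=(V_u,E_u)$ is the subgraph induced by the edge set $f^{-1}((-\infty,u])$ (vertices: endpoints of these edges), $G_{+\infty}=G$. $\Delta^+=\{(u,v)\in\mathbb{R}\times(\mathbb{R}\cup\{+\infty\}):u<v\}$, with $+\infty+h=+\infty$. A feature assigns to every graph $H=(V_H,E_H)$ a function $2^{V_H\cup E_H}\to\{true,false\}$. The matching feature $\mathcal{M}$ is true on $X$ iff $X$ is a set of edges of $H$ no two of which share a vertex. The maximal feature $m\mathcal{F}$ of a feature $\mathcal{F}$ is: $m\mathcal{F}(X)=true$ in $H$ iff $\mathcal{F}(X)=true$ in $H$ and there is no $Y\subseteq V_H\cup E_H$ with $X\subsetneq Y$ and $\mathcal{F}(Y)=true$. Thus $m\mathcal{M}$ is true exactly on maximal matchings. For a feature $\mathcal{F}$: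 $X\subseteq V\cup E$ is an $\mathcal{F}$-set at level $w$ if $X\subseteq V_w\cup E_w$ and $\mathcal{F}(X)=true$ in $G_w$; a steady $\mathcal{F}$-set at $(u,v)\in\Delta^+$ if it is an $\mathcal{F}$-set at all levels $w\in[u,v]$; a ranging $\mathcal{F}$-set at $(u,v)$ if it is an $\mathcal{F}$-set at some level $w\le u$ and at some level $w'\ge v$. $\sigma^{\mathcal{F}}_{(G,f)}(u,v)$ and $\varrho^{\mathcal{F}}_{(G,f)}(u,v)$ are the numbers of steady, resp. ranging, $\mathcal{F}$-sets at $(u,v)$. *)

From HB Require Import structures.
From mathcomp Require Import all_boot all_order all_algebra.
From mathcomp Require Import boolp reals.
Set Implicit Arguments. Unset Strict Implicit. Unset Printing Implicit Defensive.
Import Order.TTheory GRing.Theory Num.Theory.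
Local Open Scope ring_scope.

(* A finite simple graph G = (V, E): vertex type V, edge type E, and each edge
   e has a set of endpoints [ends e] of size 2; [ends] injective (no multi-edges). *)

Inductive lev (R : Type) := Fin of R | PInf.
Arguments PInf {R}.

Definition lev_le (R : realType) (a b : lev R) : Prop :=
  match a, b with
  | Fin x, Fin y => x <= y
  | _, PInf => True
  | PInf, Fin _ => False
  end.

Definition lev_add (R : realType) (a : lev R) (h : R) : lev R :=
  match a with Fin x => Fin (x + h) | PInf => PInf end.

Section Graphs.
Variables (R : realType) (V E : finType) (ends : E -> {set V}).

(* A (sub)graph H = (VH, EH) of G is given by its vertex and edge sets.
   A feature assigns to H a predicate on subsets of V_H u E_H, which we
   represent as subsets of V + E (the disjoint union of vertices and edges). *)
Definition feature := {set V} -> {set E} -> {set (V + E)} -> Prop.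

Definition elems (VH : {set V}) (EH : {set E}) : {set (V + E)} :=
  [set x | match x with inl v => v \in VH | inr e => e \in EH end].

Definition matching_feature : feature := fun VH EH X =>
  (forall x, x \in X -> exists2 e, x = inr e & e \in EH) /\
  (forall e1 e2, inr e1 \in X -> inr e2 \in X -> e1 <> e2 ->
     [disjoint ends e1 & ends e2]).

Definition maximal_feature (F : feature) : feature := fun VH EH X =>
  F VH EH X /\
  ~ (exists Y : {set (V + E)},
       Y \subset elems VH EH /\ X \proper Y /\ F VH EH Y).

Definition Elev (f : E -> R) (w : lev R) : {set E} :=
  match w with Fin u => [set e | f e <= u] | PInf => setT end.

Definition Vlev (f : E -> R) (w : lev R) : {set V} :=
  match w with
  | Fin u => \bigcup_(e in Elev f (Fin u)) ends e
  | PInf => setT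
  end.

Definition Fset_at (F : feature) (f : E -> R) (w : lev R) (X : {set (V + E)}) :=
  X \subset elems (Vlev f w) (Elev f w) /\ F (Vlev f w) (Elev f w) X.

Definition steady (F : feature) (f : E -> R) (u : R) (v : lev R) X :=
  forall w : lev R, lev_le (Fin u) w -> lev_le w v -> Fset_at F f w X.

Definition ranging (F : feature) (f : E -> R) (u : R) (v : lev R) X :=
  (exists w : lev R, lev_le w (Fin u) /\ Fset_at F f w X) /\
  (exists w' : lev R, lev_le v w' /\ Fset_at F f w' X).

Definition sigmaF (F : feature) (f : E -> R) (u : R) (v : lev R) : nat :=
  #|[set X : {set (V + E)} | `[< steady F f u v X >]]|.

Definition rhoF (F : feature) (f : E -> R) (u : R) (v : lev R) : nat :=
  #|[set X : {set (V + E)} | `[< ranging F f u v X >]]|.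

End Graphs.

From HB Require Import structures.
From mathcomp Require Import all_boot all_order all_algebra.
From mathcomp Require Import boolp reals.
From mathcomp Require Import lra.
Import Order.TTheory GRing.Theory Num.Theory.
Local Open Scope ring_scope.

(* Matching is a monotone feature: a matching of a subgraph stays a matching of
   any supergraph.  For a monotone feature F the maximal feature mF is convex:
   if X is mF-maximal in G1 and in G3, with G1 a subgraph of G2 and G2 a
   subgraph of G3, then X is an F-set of G2, and any F-set of G2 strictly
   containing X would be one of G3 too.  Sublevel graphs increase with the
   level, so being an mF-set at levels a <= c forces it at every level between:
   steady and ranging sets coincide.  If |f - g| <= h then
   G^f_{w-h} <= G^g_w <= G^f_{w+h}, so by convexity every steady set of f at
   (u-h, v+h) is a steady set of g at (u, v). *)

Section Levels.
Context {R : realType}.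
Implicit Types (a b c : lev R) (x h : R).

Lemma lev_le_refl a : lev_le a a.
Proof. by case: a => //= x; exact: lexx. Qed.

Lemma lev_le_trans {a b c} : lev_le a b -> lev_le b c -> lev_le a c.
Proof. by case: a => [x|]; case: b => [y|]; case: c => [z|] //=; exact: le_trans. Qed.

Lemma PInf_lev_le {b} : lev_le PInf b -> b = PInf.
Proof. by case: b. Qed.

Lemma lev_le_add {a b} h : lev_le a b -> lev_le (lev_add a h) (lev_add b h).
Proof. by case: a => [x|]; case: b => [y|] //=; rewrite lerD2r. Qed.

Context {E : finType}.
Implicit Types (f g : E -> R).

Lemma Elev_le f a b : lev_le a b -> Elev f a \subset Elev f b.
Proof.
case: b => [y|] ab; last exact: subsetT.
case: a ab => [x|] //= xy; apply/subsetP => e; rewrite !inE => fex.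
exact: le_trans xy.
Qed.

Lemma Elev_subset_shift f g x h :
  (forall e, g e <= f e + h) -> Elev f (Fin x) \subset Elev g (Fin (x + h)).
Proof.
move=> gf; apply/subsetP => e; rewrite !inE => fex.
by apply: le_trans (gf e) _; rewrite lerD2r.
Qed.

Lemma Vlev_subset (V : finType) (ends : E -> {set V}) f g a b :
  Elev f a \subset Elev g b -> (a = PInf -> b = PInf) ->
  Vlev ends f a \subset Vlev ends g b.
Proof.
case: b => [y|] sE ab; last exact: subsetT.
case: a sE ab => [x|] sE ab; last by have := ab erefl.
apply/bigcupsP => e fe; apply: (bigcup_max e) => //; exact: (subsetP sE).
Qed.

Lemma Vlev_le (V : finType) (ends : E -> {set V}) f a b :
  lev_le a b -> Vlev ends f a \subset Vlev ends f b.
Proof.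
move=> ab; apply: Vlev_subset => [|a_inf]; first exact: Elev_le.
by apply: PInf_lev_le; rewrite -a_inf.
Qed.

End Levels.

Section MonotoneFeatures.
Context {V E : finType}.
Implicit Types (F : feature V E) (X : {set (V + E)}).

Definition monotone_feature F := forall (V1 V2 : {set V}) (E1 E2 : {set E}) X,
  V1 \subset V2 -> E1 \subset E2 -> F V1 E1 X -> F V2 E2 X.

Lemma elems_subset {V1 V2 : {set V}} {E1 E2 : {set E}} :
  V1 \subset V2 -> E1 \subset E2 -> elems V1 E1 \subset elems V2 E2.
Proof.
move=> sV sE; apply/subsetP => -[v|e]; rewrite !inE.
  exact: (subsetP sV).
exact: (subsetP sE).
Qed.

Lemma matching_feature_monotone (ends : E -> {set V}) :
  monotone_feature (matching_feature ends).
Proof.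
move=> V1 V2 E1 E2 X _ sE [inE1 disj]; split => // x /inE1 [e -> e1].
by exists e => //; exact: (subsetP sE).
Qed.

Lemma maximal_feature_convex {F} {V1 V2 V3 : {set V}} {E1 E2 E3 : {set E}} {X} :
  monotone_feature F ->
  V1 \subset V2 -> E1 \subset E2 -> V2 \subset V3 -> E2 \subset E3 ->
  X \subset elems V1 E1 /\ maximal_feature F V1 E1 X ->
  X \subset elems V3 E3 /\ maximal_feature F V3 E3 X ->
  X \subset elems V2 E2 /\ maximal_feature F V2 E2 X.
Proof.
move=> monoF sV12 sE12 sV23 sE23 [X1 [FX _]] [_ [_ maxX]].
split; first exact: subset_trans X1 (elems_subset sV12 sE12).
split; first exact: monoF FX.
move=> [Y [Y2 [XY FY]]]; apply: maxX; exists Y.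
split; first exact: subset_trans Y2 (elems_subset sV23 sE23).
by split; last exact: monoF FY.
Qed.

Context {R : realType}.
Variable ends : E -> {set V}.
Context {F : feature V E}.
Hypothesis monoF : monotone_feature F.
Let mF := maximal_feature F.

Lemma Fset_at_between {f : E -> R} {a b c : lev R} {X} :
  lev_le a b -> lev_le b c ->
  Fset_at ends mF f a X -> Fset_at ends mF f c X -> Fset_at ends mF f b X.
Proof.
move=> ab bc Xa Xc; apply: (maximal_feature_convex monoF _ _ _ _ Xa Xc);
  by [apply: Vlev_le | apply: Elev_le].
Qed.

Lemma steady_iff_ranging (f : E -> R) {u : R} {v : lev R} X :
  lev_le (Fin u) v -> steady ends mF f u v X <-> ranging ends mF f u v X.
Proof.
move=> uv; split => [stX | [[w [wu Xw]] [w' [vw' Xw']]] w'' uw'' w''v].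
  have uu := lev_le_refl (Fin u); have vv := lev_le_refl v.
  by split; [exists (Fin u) | exists v]; split => //; apply: stX.
apply: Fset_at_between Xw Xw'; first exact: lev_le_trans wu uw''.
exact: lev_le_trans w''v vw'.
Qed.

Lemma sigmaF_rhoF (f : E -> R) (u : R) (v : lev R) :
  lev_le (Fin u) v -> sigmaF ends mF f u v = rhoF ends mF f u v.
Proof.
move=> uv; rewrite /sigmaF /rhoF; apply: eq_card => X; rewrite !inE.
by have [st_ra ra_st] := steady_iff_ranging f X uv; apply/asboolP/asboolP.
Qed.

Lemma steady_shift (f g : E -> R) (h u : R) (v : lev R) X :
  0 <= h -> (forall e, `|f e - g e| <= h) ->
  steady ends mF f (u - h) (lev_add v h) X -> steady ends mF g u v X.
Proof.
move=> h0 fg stX [x|] ux xv; last first.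
  (* at level +oo the sublevel graph is G itself, for f as for g *)
  by move: stX; rewrite (PInf_lev_le xv) => stX; exact: (stX PInf I I).
have gf e : g e <= f e + h by move: (fg e); rewrite ler_norml; lra.
have fg' e : f e <= g e + h by move: (fg e); rewrite ler_norml; lra.
have xh_vh : lev_le (Fin (x + h)) (lev_add v h) by exact: (lev_le_add h xv).
have X_lo : Fset_at ends mF f (Fin (x - h)) X.
  apply: stX; first by move: ux => /=; lra.
  by apply: lev_le_trans xh_vh => /=; lra.
have X_hi : Fset_at ends mF f (Fin (x + h)) X.
  by apply: stX => //=; move: ux => /=; lra.
have sE_lo : Elev f (Fin (x - h)) \subset Elev g (Fin x).
  by rewrite -{2}(subrK h x); exact: Elev_subset_shift.
have sE_hi : Elev g (Fin x) \subset Elev f (Fin (x + h)) by exact: Elev_subset_shift.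
by apply: (maximal_feature_convex monoF _ sE_lo _ sE_hi X_lo X_hi);
  apply: Vlev_subset.
Qed.

Lemma sigmaF_balanced (f g : E -> R) (h u : R) (v : lev R) :
  0 <= h -> (forall e, `|f e - g e| <= h) ->
  (sigmaF ends mF f (u - h) (lev_add v h) <= sigmaF ends mF g u v)%N.
Proof.
move=> h0 fg; apply: subset_leq_card; apply/subsetP => X; rewrite !inE.
by move=> /asboolP stX; apply/asboolP; exact: steady_shift stX.
Qed.

End MonotoneFeatures.

Theorem proposition5 (R : realType) (V E : finType) (ends : E -> {set V})
  (ends2 : forall e, #|ends e| = 2%N) (ends_inj : injective ends) :
  (forall (f : E -> R) (u : R) (v : lev R), lev_le (Fin u) v /\ Fin u <> v ->
     sigmaF ends (maximal_feature (matching_feature ends)) f u v =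
     rhoF ends (maximal_feature (matching_feature ends)) f u v) /\
  (forall (f g : E -> R) (h : R), 0 < h ->
     (forall e, `|f e - g e| <= h) ->
     forall (u : R) (v : lev R), lev_le (Fin u) v /\ Fin u <> v ->
       (sigmaF ends (maximal_feature (matching_feature ends)) f (u - h) (lev_add v h)
        <= sigmaF ends (maximal_feature (matching_feature ends)) g u v)%N).
Proof.
have monoM := matching_feature_monotone ends.
split=> [f u v [uv _] | f g h h0 fg u v _].
  exact: (sigmaF_rhoF ends monoM f u v uv).
exact: (sigmaF_balanced ends monoM f g h u v (ltW h0) fg).
Qed.
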